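(* Let $(X,d)$ be a bounded metric space, $\lambda\ge0$, and $\ell:X\to[0,+\infty)$ lower semicontinuous with $\inf_X\ell=0$. Then the function $v(x):=\ell(x)\,\mathrm{diam}(X)$ is a supersolution of $(\mathcal{G}_\lambda)$. Moreover, $T_\lambda^\infty v$ is the Perron solution of $(\mathcal{G}_\lambda)$.
   Context: $\mathrm{diam}(X)=\sup\{d(x,y):x,y\in X\}$. Global slope: $G[u](x)=\sup_{y\neq x}\frac{(u(x)-u(y))_+}{d(x,y)}$ if $u(x)<+\infty$, $G[u](x)=+\infty$ otherwise. For $(\mathcal{G}_\lambda)$: a supersolution is a lower semicontinuous $v:X\to\mathbb{R}\cup\{+\infty\}$ with $\inf_Xv=0$ and $\lambda v+G[v]\ge\ell$ on $X$; a solution is a lower semicontinuous $u$ with $\inf_Xu=0$ and $\lambda u+G[u]=\ell$ on $X$; the Perron solution is a solution that is pointwise $\ge$ every solution. $T_\lambda u(x)=\inf_{y\in X}\frac{u(y)+\ell(x)d(x,y)}{1+\lambda d(x,y)}$ for $u:X\to[0,+\infty]$, and $T_\lambda^\infty u=\lim_nT_\lambda^nu$ pointwise. *)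

From mathcomp Require Import all_boot all_order all_algebra.
From mathcomp Require Import all_classical all_reals all_analysis.
Set Implicit Arguments. Unset Strict Implicit. Unset Printing Implicit Defensive.
Import Order.TTheory GRing.Theory Num.Theory.
Local Open Scope classical_set_scope.
Local Open Scope ring_scope.
Local Open Scope ereal_scope.

Section Defs.
Context {R : realType} {X : Type}.

Definition is_metric (d : X -> X -> R) : Prop :=
  [/\ (forall x y, (0 <= d x y)%R),
      (forall x y, d x y = 0%R <-> x = y),
      (forall x y, d x y = d y x) &
      (forall x y z, (d x z <= d x y + d y z)%R)].

Definition metric_bounded (d : X -> X -> R) : Prop :=
  exists M : R, forall x y, (d x y <= M)%R.

Definition diam (d : X -> X -> R) : \bar R :=
  ereal_sup [set (d p.1 p.2)%:E | p in [set: X * X]].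

Definition lsc (d : X -> X -> R) (u : X -> \bar R) : Prop :=
  forall x (a : \bar R), a < u x ->
    exists2 delta : R, (0 < delta)%R &
      forall y, (d x y < delta)%R -> a < u y.

(* The value 0 is added to the set (harmless since all
   terms are >= 0; it only fixes the value 0 when X is a singleton). *)
Definition gslope (d : X -> X -> R) (u : X -> \bar R) (x : X) : \bar R :=
  if u x < +oo then
    ereal_sup ([set 0] `|`
      [set maxe (u x - u y) 0 * ((d x y)^-1)%:E | y in [set y | y <> x]])
  else +oo.

Definition supersolution (d : X -> X -> R) (lam : R) (ell : X -> R)
    (v : X -> \bar R) : Prop :=
  [/\ (forall x, v x != -oo), lsc d v,
      ereal_inf (range v) = 0 &
      forall x, (ell x)%:E <= lam%:E * v x + gslope d v x].

Definition solution (d : X -> X -> R) (lam : R) (ell : X -> R)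
    (u : X -> \bar R) : Prop :=
  [/\ (forall x, u x != -oo), lsc d u,
      ereal_inf (range u) = 0 &
      forall x, lam%:E * u x + gslope d u x = (ell x)%:E].

Definition perron_solution (d : X -> X -> R) (lam : R) (ell : X -> R)
    (u : X -> \bar R) : Prop :=
  solution d lam ell u /\
  forall w, solution d lam ell w -> forall x, w x <= u x.

Definition Tlam (d : X -> X -> R) (lam : R) (ell : X -> R)
    (u : X -> \bar R) (x : X) : \bar R :=
  ereal_inf [set (u y + (ell x * d x y)%:E) * ((1 + lam * d x y)^-1)%:E
            | y in [set: X]].

End Defs.

From mathcomp Require Import all_boot all_order all_algebra.
From mathcomp Require Import all_classical all_reals all_analysis.
From mathcomp Require Import lra.
Import Order.TTheory GRing.Theory Num.Theory.
Local Open Scope classical_set_scope.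
Local Open Scope ring_scope.
Local Open Scope ereal_scope.

(* Let D = diam X.  The function v = ell D is a supersolution: as
   D >= d(x, y), its slope at x towards y is at least ell x - ell y, and ell y
   can be taken arbitrarily small.  A real function u is a subsolution
   (lambda u + G[u] <= ell) exactly when u <= T_lambda u, and T_lambda is monotone with T_lambda u <= u, so the iterates of T_lambda
   decrease from v to a limit w which is the largest subsolution below v.
   Perron's argument shows that w is a solution: where w < v, a failure of the
   supersolution inequality would let us raise w by a small cone, and where
   w = v the inequality is inherited from v.  Every solution is a subsolution
   below v, hence below w. *)

Section Metric.
Context {R : realType} {X : Type} {d : X -> X -> R} (Hm : is_metric d).
Local Open Scope ring_scope.

Lemma metric_ge0 x y : 0 <= d x y. Proof. by case: Hm. Qed.

Lemma metric_eq0 x y : d x y = 0 <-> x = y. Proof. by case: Hm. Qed.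

Lemma metric_xx x : d x x = 0. Proof. exact/metric_eq0. Qed.

Lemma metric_triangle x y z : d x z <= d x y + d y z. Proof. by case: Hm. Qed.

Lemma metric_gt0 x y : y <> x -> 0 < d x y.
Proof.
by move=> yx; rewrite lt_neqAle metric_ge0 andbT eq_sym; apply/eqP => /metric_eq0 /esym.
Qed.

End Metric.

Section RealValued.
Context {R : realType} {X : Type}.
Local Open Scope ring_scope.

Lemma ereal_inf_range_eq0P (r : X -> R) :
  ereal_inf (range (fun x => (r x)%:E)) = 0%E <->
  (forall x, 0 <= r x) /\ (forall e, 0 < e -> exists x, r x < e).
Proof.
split=> [infr0|[r0 small]].
  split=> [x|e e0].
    have : (ereal_inf (range (fun x => (r x)%:E)) <= (r x)%:E)%E.
      by apply: ereal_inf_lbound; exists x.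
    by rewrite infr0.
  have : (ereal_inf (range (fun x => (r x)%:E)) < e%:E)%E by rewrite infr0 lte_fin.
  by case/ereal_inf_lt => _ [x _ <-]; rewrite lte_fin; exists x.
apply/le_anti/andP; split; last first.
  by apply: le_ereal_inf_tmp => _ [x _ <-]; rewrite lee_fin.
apply/lee_addgt0Pr => e e0; rewrite add0e.
have [x rx] := small e e0; apply: ge_ereal_inf.
by exists (r x)%:E; [exists x | rewrite lee_fin ltW].
Qed.

Lemma lsc_EFinP (d : X -> X -> R) (r : X -> R) :
  lsc d (fun x => (r x)%:E) <->
  forall x e, 0 < e -> exists2 del, 0 < del & forall y, d x y < del -> r x - e < r y.
Proof.
split=> [lscr x e e0|lscr x [a||] /=].
- have [|del del0 near_x] := lscr x (r x - e)%:E; first by rewrite lte_fin; lra.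
  by exists del => // y /near_x; rewrite lte_fin.
- rewrite lte_fin => ax.
  have [|del del0 near_x] := lscr x (r x - a); first by rewrite subr_gt0.
  by exists del => // y /near_x ry; rewrite lte_fin; lra.
- by rewrite ltNge leey.
- by move=> _; exists 1 => // y _; exact: ltNyr.
Qed.

End RealValued.

Section GlobalSlope.
Context {R : realType} {X : Type} {d : X -> X -> R} (Hm : is_metric d).
Local Open Scope ring_scope.

Lemma gslope_EFin (r : X -> R) x : gslope d (fun z => (r z)%:E) x =
  ereal_sup ([set 0%E] `|`
    [set (Num.max (r x - r y) 0 / d x y)%:E | y in [set y | y <> x]]).
Proof.
rewrite /gslope ltry; congr (ereal_sup (_ `|` _)); apply: eq_imagel => y _.
by rewrite -EFinB -EFin_max -EFinM.
Qed.

Lemma gslope_ge0 (r : X -> R) x : (0 <= gslope d (fun z => (r z)%:E) x)%E.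
Proof. by rewrite gslope_EFin; apply: ereal_sup_ubound; left. Qed.

Lemma gslope_leP (r : X -> R) x g : 0 <= g ->
  (gslope d (fun z => (r z)%:E) x <= g%:E)%E <-> forall y, r x - r y <= g * d x y.
Proof.
move=> g0; rewrite gslope_EFin; split=> [Gg y|slope_g].
  have [->|yx] := pselect (y = x); first by rewrite subrr (metric_xx Hm) mulr0.
  have : ((Num.max (r x - r y) 0 / d x y)%:E <= g%:E)%E.
    by apply: le_trans Gg; apply: ereal_sup_ubound; right; exists y.
  rewrite lee_fin ler_pdivrMr ?(metric_gt0 Hm) //; apply: le_trans.
  by rewrite le_max lexx.
apply: ge_ereal_sup => _ [->|[y yx <-]]; rewrite lee_fin //.
rewrite ler_pdivrMr ?(metric_gt0 Hm) // ge_max slope_g.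
by rewrite mulr_ge0 // (metric_ge0 Hm).
Qed.

Lemma le_lam_gslope (lam : R) (r : X -> R) x a :
  (forall g, 0 <= g -> (forall y, r x - r y <= g * d x y) -> a <= lam * r x + g) ->
  (a%:E <= lam%:E * (r x)%:E + gslope d (fun z => (r z)%:E) x)%E.
Proof.
move=> slope_bound; have := gslope_ge0 r x; have := gslope_leP r x.
case: (gslope _ _ _) => [g||] //= Gg G0; last by rewrite -EFinM addey // leey.
rewrite -EFinM -EFinD lee_fin; rewrite lee_fin in G0.
by apply: slope_bound => //; apply/(Gg g G0).
Qed.

End GlobalSlope.

Definition diamr {R : realType} {X : Type} (d : X -> X -> R) : R :=
  sup [set d p.1 p.2 | p in [set: X * X]].

Section Diameter.
Context {R : realType} {X : Type} {d : X -> X -> R} (d_bounded : metric_bounded d).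
Local Open Scope ring_scope.

Lemma diamr_ub x y : d x y <= diamr d.
Proof.
apply: ub_le_sup; last by exists (x, y).
by case: d_bounded => M dM; exists M => _ [p _ <-].
Qed.

Lemma diamE (x : X) : diam d = (diamr d)%:E.
Proof.
rewrite /diam /diamr -ereal_sup_EFin ?image_comp //; last by exists (d x x), (x, x).
by case: d_bounded => M dM; exists M => _ [p _ <-].
Qed.

End Diameter.

Section Equation.
Context {R : realType} {X : Type} (d : X -> X -> R) (lam : R) (ell : X -> R).
Local Open Scope ring_scope.
Hypotheses (Hm : is_metric d) (lam_ge0 : 0 <= lam) (ell_ge0 : forall x, 0 <= ell x).

(* Pointwise form of [u <= T_lambda u]. *)
Definition subsolution_at (u : X -> R) x :=
  forall y, u x * (1 + lam * d x y) <= u y + ell x * d x y.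

Definition subsolution (u : X -> R) := forall x, subsolution_at u x.

Lemma subsolutionP (r : X -> R) : (forall x, lam * r x <= ell x) ->
  subsolution r <->
  forall x, (lam%:E * (r x)%:E + gslope d (fun z => (r z)%:E) x <= (ell x)%:E)%E.
Proof.
move=> lam_r; split=> [sub_r x|slope_r x y].
  have slope_x : (gslope d (fun z => (r z)%:E) x <= (ell x - lam * r x)%:E)%E.
    apply/(gslope_leP Hm); first by rewrite subr_ge0.
    by move=> y; have := sub_r x y; lra.
  by rewrite -EFinM; apply: le_trans (leeD2l _ slope_x) _; rewrite -EFinD lee_fin; lra.
have := slope_r x; have := gslope_leP Hm r x; have := gslope_ge0 (d:=d) r x.
case: (gslope _ _ _) => [g||] // G0 Gg.
rewrite -EFinM -EFinD !lee_fin in G0 * => lam_g.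
have := (Gg g G0).1 (lexx _) y; have := metric_ge0 Hm x y; nra.
Qed.

Lemma subsolution_lam_le (r : X -> R) : (forall x, 0 <= r x) -> subsolution r ->
  (forall e, 0 < e -> exists y, r y < e) -> forall x, lam * r x <= ell x.
Proof.
move=> r0 sub_r small x; apply/ler_addgt0Pr => e e0.
have [|y ry] := small (e / (lam + 1)); first by apply: divr_gt0 => //; have := lam_ge0; lra.
rewrite ltr_pdivlMr in ry; last by have := lam_ge0; lra.
rewrite leNgt; apply/negP => gap.
have : 0 <= (lam * r x - ell x) * (lam * d x y).
  by rewrite mulr_ge0 ?mulr_ge0 ?(metric_ge0 Hm) //; have := ell_ge0 x; lra.
have := ler_wpM2l lam_ge0 (sub_r x y); have := r0 y; have := ell_ge0 x; have := lam_ge0.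
lra.
Qed.

Lemma subsolution_lsc (r : X -> R) : (forall x, 0 <= r x) -> subsolution r ->
  lsc d (fun x => (r x)%:E).
Proof.
move=> r0 sub_r; apply/lsc_EFinP => x e e0.
have ell1 : 0 < ell x + 1 by have := ell_ge0 x; lra.
exists (e / (ell x + 1)) => [|y]; first exact: divr_gt0.
rewrite ltr_pdivlMr // => near_x.
have := mulr_ge0 (r0 x) (mulr_ge0 lam_ge0 (metric_ge0 Hm x y)).
have := sub_r x y; have := metric_ge0 Hm x y; have := ell_ge0 x; nra.
Qed.

Lemma subsolution_le_bound (D : R) (r : X -> R) : (forall x y, d x y <= D) ->
  (forall x, 0 <= r x) -> (forall e, 0 < e -> exists y, r y < e) -> subsolution r ->
  forall x, r x <= ell x * D.
Proof.
move=> dD r0 small sub_r x; apply/ler_addgt0Pr => e /small [y ry].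
have := mulr_ge0 (r0 x) (mulr_ge0 lam_ge0 (metric_ge0 Hm x y)).
have := ler_wpM2l (ell_ge0 x) (dD x y); have := sub_r x y; nra.
Qed.

Lemma cone_subsolution_at x (a K : R) z : 0 <= K -> K + lam * a <= ell z ->
  subsolution_at (fun y => a - K * d x y) z.
Proof.
move=> K0 Kz y.
have := ler_wpM2l K0 (metric_triangle Hm x z y).
have := mulr_ge0 (mulr_ge0 lam_ge0 (metric_ge0 Hm z y)) (mulr_ge0 K0 (metric_ge0 Hm x z)).
have : 0 <= (ell z - K - lam * a) * d z y by rewrite mulr_ge0 ?(metric_ge0 Hm) //; lra.
nra.
Qed.

Lemma subsolution_max (w b : X -> R) : subsolution w ->
  (forall z, w z < b z -> subsolution_at b z) ->
  subsolution (fun z => Num.max (w z) (b z)).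
Proof.
move=> sub_w sub_b z y /=.
have w_max : w y <= Num.max (w y) (b y) by rewrite le_max lexx.
have b_max : b y <= Num.max (w y) (b y) by rewrite le_max lexx orbT.
have [_|/sub_b/(_ y)] := leP (b z) (w z); last by lra.
by have := sub_w z y; lra.
Qed.

Lemma solution_EFin (u : X -> \bar R) : solution d lam ell u ->
  exists r : X -> R, u = (fun x => (r x)%:E).
Proof.
case=> u_fin _ _ u_eq; exists (fun x => fine (u x)); apply: funext => x.
rewrite fineK // fin_numE u_fin /=; apply/eqP => ux; have := u_eq x.
rewrite /gslope ux ltxx addey //.
rewrite -ltNye; apply: lt_le_trans ltNy0 _.
by rewrite mule_ge0 ?lee_fin ?le0y.
Qed.

(* Perron's argument: if the slope inequality failed at [x], raising [w] by a
   small cone [w x + c - K d(x, .)] would give a larger subsolution below [v]. *)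
Lemma maximal_subsolution_slope (v w : X -> R) x g :
  lsc d (fun z => (ell z)%:E) -> lsc d (fun z => (v z)%:E) ->
  subsolution w -> (forall z, w z <= v z) ->
  (forall u, subsolution u -> (forall z, u z <= v z) -> forall z, u z <= w z) ->
  w x < v x -> 0 <= g -> (forall y, w x - w y <= g * d x y) ->
  ell x <= lam * w x + g.
Proof.
move=> /lsc_EFinP lsc_ell /lsc_EFinP lsc_v sub_w w_le_v w_max wv g0 slope_g.
rewrite leNgt; apply/negP => gap.
set k := ell x - lam * w x - g; have kE : k = ell x - lam * w x - g by [].
have k0 : 0 < k by lra.
have [|d1 d1_gt0 near_ell] := lsc_ell x (k / 2); first by rewrite divr_gt0.
have [|d2 d2_gt0 near_v] := lsc_v x ((v x - w x) / 2).
  by rewrite divr_gt0 // subr_gt0.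
set del := Num.min d1 d2; have del0 : 0 < del by rewrite lt_min d1_gt0.
have [del_d1 del_d2] : del <= d1 /\ del <= d2 by rewrite /del !ge_min !lexx orbT.
have lam1 : 0 < 4 * (lam + 1) by have := lam_ge0; lra.
set c := Num.min ((v x - w x) / 2) (Num.min (k / (4 * (lam + 1))) (k * del / 4)).
have c0 : 0 < c by rewrite /c !lt_min !divr_gt0 ?mulr_gt0 ?subr_gt0 //; lra.
have c_gap : c <= (v x - w x) / 2 by rewrite /c ge_min lexx.
have c_lam : c * (4 * (lam + 1)) <= k by rewrite -ler_pdivlMr // /c !ge_min lexx orbT.
have c_del : c * 4 <= k * del by rewrite -ler_pdivlMr // /c !ge_min lexx !orbT.
pose K := g + k / 4; have K0 : 0 <= K by rewrite /K; lra.
pose b z := w x + c - K * d x z.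
have near_x z : w z < b z -> d x z < del.
  move=> wb; have := slope_g z; have := metric_ge0 Hm x z.
  rewrite /b /K in wb; rewrite -(ltr_pM2l (_ : 0 < k / 4)) ?divr_gt0 //; lra.
have : Num.max (w x) (b x) <= w x.
  apply: (w_max (fun z => Num.max (w z) (b z))) => [|z].
    apply: subsolution_max => // z /near_x near_z.
    apply: cone_subsolution_at => //.
    have := near_ell z (lt_le_trans near_z del_d1).
    rewrite /K; lra.
  rewrite ge_max w_le_v /=; have [bw|/near_x near_z] := leP (b z) (w z).
    exact: le_trans bw (w_le_v z).
  have := near_v z (lt_le_trans near_z del_d2).
  have := mulr_ge0 K0 (metric_ge0 Hm x z); rewrite /b; lra.
rewrite ge_max /b (metric_xx Hm) mulr0 subr0; lra.
Qed.

Definition Tlamr (u : X -> R) x :=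
  inf [set (u y + ell x * d x y) / (1 + lam * d x y) | y in [set: X]].

Lemma Tlam_den_gt0 x y : 0 < 1 + lam * d x y.
Proof. by have := mulr_ge0 lam_ge0 (metric_ge0 Hm x y); lra. Qed.

Section NonNegative.
Variable u : X -> R.
Hypothesis u_ge0 : forall x, 0 <= u x.

Lemma Tlam_term_ge0 x y : 0 <= (u y + ell x * d x y) / (1 + lam * d x y).
Proof.
by rewrite divr_ge0 ?addr_ge0 ?mulr_ge0 ?(metric_ge0 Hm).
Qed.

Lemma Tlamr_le x y : Tlamr u x <= (u y + ell x * d x y) / (1 + lam * d x y).
Proof.
apply: ge_inf; last by exists y.
by exists 0 => _ [z _ <-]; exact: Tlam_term_ge0.
Qed.

Lemma Tlamr_ge0 x : 0 <= Tlamr u x.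
Proof.
by apply: lb_le_inf => [|_ [y _ <-]]; [eexists; exists x | exact: Tlam_term_ge0].
Qed.

Lemma Tlamr_le_self x : Tlamr u x <= u x.
Proof. by have := Tlamr_le x x; rewrite (metric_xx Hm) !mulr0 !addr0 divr1. Qed.

Lemma TlamE : Tlam d lam ell (fun x => (u x)%:E) = (fun x => (Tlamr u x)%:E).
Proof.
apply: funext => x; rewrite /Tlam /Tlamr -ereal_inf_EFin ?image_comp //.
- by exists 0 => _ [z _ <-]; exact: Tlam_term_ge0.
- by exists ((u x + ell x * d x x) / (1 + lam * d x x)), x.
Qed.

End NonNegative.

Lemma subsolution_le_Tlamr (u u' : X -> R) x : subsolution u ->
  (forall y, u y <= u' y) -> u x <= Tlamr u' x.
Proof.
move=> sub_u le_u; apply: lb_le_inf => [|_ [y _ <-]]; first by eexists; exists x.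
by rewrite ler_pdivlMr ?Tlam_den_gt0 //; apply: le_trans (sub_u x y) _; rewrite lerD2r.
Qed.

Section Perron.
Hypotheses (d_bounded : metric_bounded d) (ell_lsc : lsc d (fun x => (ell x)%:E)).
Hypothesis ell_small : forall e, 0 < e -> exists x, ell x < e.

Definition vdiam x := ell x * diamr d.

Definition Tlamr_iter n := iter n Tlamr vdiam.

Definition perron x := inf (range (Tlamr_iter ^~ x)).

Lemma diamr_ge0 : 0 <= diamr d.
Proof.
have [x _] := ell_small 1 ltr01.
exact: le_trans (metric_ge0 Hm x x) (diamr_ub d_bounded x x).
Qed.

Lemma vdiam_ge0 x : 0 <= vdiam x.
Proof. exact: mulr_ge0 (ell_ge0 x) diamr_ge0. Qed.

Lemma vdiam_small e : 0 < e -> exists x, vdiam x < e.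
Proof.
move=> e0; have D1 : 0 < diamr d + 1 by have := diamr_ge0; lra.
have [y] := ell_small _ (divr_gt0 e0 D1); rewrite ltr_pdivlMr // => ell_y.
by exists y; have := ell_ge0 y; have := diamr_ge0; rewrite /vdiam; nra.
Qed.

Lemma vdiam_lsc : lsc d (fun x => (vdiam x)%:E).
Proof.
apply/lsc_EFinP => x e e0; have D1 : 0 < diamr d + 1 by have := diamr_ge0; lra.
have q0 := divr_gt0 e0 D1; have qE : e / (diamr d + 1) * (diamr d + 1) = e.
  by rewrite divfK // gt_eqF.
have [del del0 near_x] := (lsc_EFinP _ _).1 ell_lsc x _ q0.
exists del => // y /near_x ell_y; rewrite /vdiam.
have := ler_wpM2r diamr_ge0 (ltW ell_y); lra.
Qed.

Lemma vdiam_slope x g : 0 <= g -> (forall y, vdiam x - vdiam y <= g * d x y) -> ell x <= g.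
Proof.
move=> g0 slope_g; rewrite leNgt; apply/negP => gap.
have [|y ell_y] := ell_small (ell x - g); first by rewrite subr_gt0.
have yx : y <> x by move=> yx; move: ell_y; rewrite yx; lra.
have dD := diamr_ub d_bounded x y.
have ell_gap : 0 < ell x - ell y - g by lra.
have := mulr_gt0 ell_gap (lt_le_trans (metric_gt0 Hm _ _ yx) dD).
have := ler_wpM2l g0 dD; have := slope_g y; rewrite /vdiam; lra.
Qed.

Lemma supersolution_vdiam : supersolution d lam ell (fun x => (vdiam x)%:E).
Proof.
split=> [//| | |x]; first exact: vdiam_lsc.
  by apply/ereal_inf_range_eq0P; split; [exact: vdiam_ge0 | exact: vdiam_small].
apply: (le_lam_gslope Hm) => g g0 /(vdiam_slope _ _ g0).
by have := mulr_ge0 lam_ge0 (vdiam_ge0 x); lra.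
Qed.

Lemma Tlamr_iter_ge0 n x : 0 <= Tlamr_iter n x.
Proof. by elim: n x => [|n IH] x; [exact: vdiam_ge0 | exact: Tlamr_ge0]. Qed.

Lemma Tlam_iterE n :
  iter n (Tlam d lam ell) (fun x => (vdiam x)%:E) = (fun x => (Tlamr_iter n x)%:E).
Proof. by elim: n => [|n IH] //=; rewrite IH TlamE //; exact: Tlamr_iter_ge0. Qed.

Lemma perron_le n x : perron x <= Tlamr_iter n x.
Proof.
apply: ge_inf; last by exists n.
by exists 0 => _ [k _ <-]; exact: Tlamr_iter_ge0.
Qed.

Lemma perron_ge0 x : 0 <= perron x.
Proof.
apply: lb_le_inf => [|_ [n _ <-]]; [by eexists; exists 0%N | exact: Tlamr_iter_ge0].
Qed.

Lemma cvg_Tlamr_iter x : (fun n => (Tlamr_iter n x)%:E) @ \oo --> (perron x)%:E.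
Proof.
rewrite /perron -ereal_inf_EFin ?image_comp; first last.
- by eexists; exists 0%N.
- by exists 0 => _ [k _ <-]; exact: Tlamr_iter_ge0.
apply: ereal_nonincreasing_cvgn; apply/nonincreasing_seqP => n.
by rewrite lee_fin; apply: Tlamr_le_self; exact: Tlamr_iter_ge0.
Qed.

Lemma perron_subsolution : subsolution perron.
Proof.
move=> x y; rewrite leNgt; apply/negP => gap.
have : perron y < perron x * (1 + lam * d x y) - ell x * d x y by lra.
case/inf_lt => [|_ [n _ <-] iter_y]; first by eexists; exists 0%N.
have := Tlamr_le _ (Tlamr_iter_ge0 n) x y.
rewrite ler_pdivlMr ?Tlam_den_gt0 // => iterS_x.
have := ler_wpM2r (ltW (Tlam_den_gt0 x y)) (perron_le n.+1 x); lra.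
Qed.

Lemma le_perron u : subsolution u -> (forall x, u x <= vdiam x) ->
  forall x, u x <= perron x.
Proof.
move=> sub_u le_u x; apply: lb_le_inf => [|_ [n _ <-]]; first by eexists; exists 0%N.
by elim: n x => [|n IH] x; [exact: le_u | exact: subsolution_le_Tlamr].
Qed.

Lemma perron_small e : 0 < e -> exists x, perron x < e.
Proof.
by move=> /vdiam_small [x vx]; exists x; exact: le_lt_trans (perron_le 0 x) vx.
Qed.

Lemma perron_slope x g : 0 <= g -> (forall y, perron x - perron y <= g * d x y) ->
  ell x <= lam * perron x + g.
Proof.
move=> g0 slope_g; have [lt_v|ge_v] := ltP (perron x) (vdiam x).
  apply: (maximal_subsolution_slope _ _ _ _ ell_lsc vdiam_lsc perron_subsolution) => //.
    exact: perron_le 0%N.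
  exact: le_perron.
(* Where [perron] touches [vdiam], its slopes dominate those of [vdiam]. *)
have /(vdiam_slope _ _ g0) : forall y, vdiam x - vdiam y <= g * d x y.
  by move=> y; apply: le_trans (slope_g y); have := perron_le 0 y; rewrite /=; lra.
by have := mulr_ge0 lam_ge0 (perron_ge0 x); lra.
Qed.

Lemma solution_perron : solution d lam ell (fun x => (perron x)%:E).
Proof.
have lam_perron := subsolution_lam_le perron perron_ge0 perron_subsolution perron_small.
split=> [//| | |x].
- exact: subsolution_lsc perron perron_ge0 perron_subsolution.
- by apply/ereal_inf_range_eq0P; split; [exact: perron_ge0 | exact: perron_small].
apply/le_anti/andP; split.
  exact: (subsolutionP perron lam_perron).1 perron_subsolution x.
by apply: (le_lam_gslope Hm) => g g0 /(perron_slope _ _ g0).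
Qed.

Lemma solution_le_perron u : solution d lam ell u -> forall x, (u x <= (perron x)%:E)%E.
Proof.
move=> sol_u; have [r u_r] := solution_EFin u sol_u; subst u.
case: sol_u => _ _ inf_r r_eq x; rewrite lee_fin.
have [r0 r_small] := (ereal_inf_range_eq0P r).1 inf_r.
have lam_r y : lam * r y <= ell y.
  by rewrite -lee_fin -(r_eq y) EFinM leeDl // gslope_ge0.
have sub_r : subsolution r by apply/(subsolutionP r lam_r) => y; rewrite r_eq.
have r_le y : r y <= vdiam y.
  exact: subsolution_le_bound _ r (diamr_ub d_bounded) r0 r_small sub_r y.
exact: le_perron sub_r r_le x.
Qed.

End Perron.

End Equation.

Theorem proposition5p2 (R : realType) (X : Type) (d : X -> X -> R)
  (lam : R) (ell : X -> R) :
  is_metric d -> metric_bounded d -> (0 <= lam)%R ->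
  (forall x, (0 <= ell x)%R) -> lsc d (fun x => (ell x)%:E) ->
  ereal_inf (range (fun x => (ell x)%:E)) = 0 ->
  let v := fun x => (ell x)%:E * diam d in
  supersolution d lam ell v /\
  exists w : X -> \bar R,
    (forall x, (fun n => iter n (Tlam d lam ell) v x) @ \oo --> w x) /\
    perron_solution d lam ell w.
Proof.
move=> Hm Hb Hlam Hell Hlsc Hinf v.
have [_ ell_small] := (ereal_inf_range_eq0P ell).1 Hinf.
have [x0 _] := ell_small 1%R ltr01.
have -> : v = (fun x => (vdiam d ell x)%:E).
  by apply: funext => x; rewrite /v (diamE Hb x0) -EFinM.
split; first exact: supersolution_vdiam.
exists (fun x => (perron d lam ell x)%:E); split; last split.
- move=> x; under eq_fun do rewrite Tlam_iterE //.
  exact: cvg_Tlamr_iter.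
- exact: solution_perron.
- exact: solution_le_perron.
Qed.
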